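(* Assume the setting described in the context. Let $\lambda\in\mathbb{R}^F$ satisfy $$\lambda_f\ge\sum_{\sigma\in f:\,\sigma'\in A(f,\sigma)}\rho(\sigma'\mid f,\sigma)\frac{\omega(\sigma)}{\omega(\sigma')}\quad\text{for all }f\in F,\ \sigma'\in\Omega.$$ Then for every word $W$ and every state $\sigma\in\Omega$: $$\sum_{\tau:\ \text{word }W,\ \text{last state }\sigma}p(\tau)\le\gamma^{\mathrm{init}}\lambda_W\,\omega(\sigma),\qquad\sum_{\tau:\ \text{word }W}p(\tau)\le\gamma^{\mathrm{init}}\lambda_W,$$ where the sums range over walks $\tau$ with the indicated word (and, in the first sum, with last state $\sigma$).
   Context: Setting: $\Omega$ is a finite set and $F$ a finite set of flaws, each a nonempty subset of $\Omega$; $F_\sigma=\{f:\sigma\in f\}$. For $\sigma\in\Omega$ and $f\in F_\sigma$ there is a probability distribution $\rho(\cdot\mid f,\sigma)$ on $\Omega$ with support $A(f,\sigma)$. $\omega$ is a probability distribution on $\Omega$ with $\omega(\sigma)>0$ for all $\sigma$, and $\omega^{\mathrm{init}}$ is a probability distribution on $\Omega$. Set $\gamma^{\mathrm{init}}=\max_\sigma\omega^{\mathrm{init}}(\sigma)/\omega(\sigma)$. A walk is $\tau=\sigma_1\xrightarrow{w_1}\sigma_2\cdots\xrightarrow{w_t}\sigma_{t+1}$ with $w_i\in F_{\sigma_i}$ and $\sigma_{i+1}\in A(w_i,\sigma_i)$; the walk with $t=0$ consists of a single state. Its word is $w_1\ldots w_t$, and $p(\tau)=\omega^{\mathrm{init}}(\sigma_1)\prod_{i=1}^t\rho(\sigma_{i+1}\mid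 w_i,\sigma_i)$. For a word $W=w_1\ldots w_t$, $\lambda_W=\prod_i\lambda_{w_i}$. *)

From mathcomp Require Import all_boot all_order all_algebra.
Set Implicit Arguments. Unset Strict Implicit. Unset Printing Implicit Defensive.
Import Order.TTheory GRing.Theory Num.Theory.
Local Open Scope ring_scope.

Section Walks.
Variables (R : realFieldType) (Omega : finType).

Definition is_distr (mu : Omega -> R) : Prop :=
  (forall x, 0 <= mu x) /\ \sum_(x : Omega) mu x = 1.

(* rho f s s' = rho(s' | f, s);  support A(f,s) *)
Variable rho : {set Omega} -> Omega -> Omega -> R.

Definition A (f : {set Omega}) (s : Omega) : {set Omega} :=
  [set s' | 0 < rho f s s'].

Definition is_walk (F : {set {set Omega}}) (W : seq {set Omega})
  (st : {ffun 'I_(size W).+1 -> Omega}) : bool :=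
  [forall i : 'I_(size W),
     let w := nth set0 W i in
     [&& w \in F, st (inord i) \in w & st (inord i.+1) \in A w (st (inord i))]].

Definition walk_prob (winit : Omega -> R) (W : seq {set Omega})
  (st : {ffun 'I_(size W).+1 -> Omega}) : R :=
  winit (st ord0) *
  \prod_(i < size W) rho (nth set0 W i) (st (inord i)) (st (inord i.+1)).

Definition walk_last (W : seq {set Omega})
  (st : {ffun 'I_(size W).+1 -> Omega}) : Omega := st ord_max.

Definition gamma_init (omega winit : Omega -> R) : R :=
  \big[Num.max/0]_(s : Omega) (winit s / omega s).

Definition lambdaW (lambda : {set Omega} -> R) (W : seq {set Omega}) : R :=
  \prod_(f <- W) lambda f.

End Walks.

From mathcomp Require Import all_boot all_order all_algebra zify ring.
Import Order.TTheory GRing.Theory Num.Theory.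
Local Open Scope ring_scope.
Set Implicit Arguments. Unset Strict Implicit.

(* Let q_W(s) be the total probability of the walks with word W ending in s.
   Appending a flaw f to W gives
     q_{Wf}(s') = sum_{s in f, s' in A(f,s)} q_W(s) rho(s' | f, s),
   so the invariant q_W(s) <= gamma_init lambda_W omega(s), which holds for the
   empty word by the definition of gamma_init, propagates along W: dividing by
   omega(s') turns the recursion into exactly the sum bounded by lambda_f.
   Summing over s and using sum_s omega(s) = 1 gives the second bound. *)

Section FfunRcons.
Variable T : finType.

Definition ffun_rcons n (st : {ffun 'I_n.+1 -> T}) (x : T) : {ffun 'I_n.+2 -> T} :=
  [ffun i => if unlift ord_max i is Some j then st j else x].

Lemma ffun_rcons_bij n :
  bijective (fun p : {ffun 'I_n.+1 -> T} * T => ffun_rcons p.1 p.2).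
Proof.
exists (fun st : {ffun 'I_n.+2 -> T} => ([ffun j => st (lift ord_max j)], st ord_max)).
- case=> st x /=; congr pair; last by rewrite ffunE unlift_none.
  by apply/ffunP=> j; rewrite !ffunE liftK.
- move=> st; apply/ffunP=> i; rewrite !ffunE.
  by case: unliftP => [j ->|->] //; rewrite ffunE.
Qed.

Lemma big_ffun_rcons (R : Type) (idx : R) (op : Monoid.com_law idx) n
    (G : {ffun 'I_n.+2 -> T} -> R) :
  \big[op/idx]_(st : {ffun 'I_n.+2 -> T}) G st =
  \big[op/idx]_(st : {ffun 'I_n.+1 -> T}) \big[op/idx]_(x : T) G (ffun_rcons st x).
Proof.
by rewrite (reindex _ (onW_bij _ (ffun_rcons_bij n))) pair_bigA.
Qed.

Lemma ffun_rcons_max n (st : {ffun 'I_n.+1 -> T}) x : ffun_rcons st x ord_max = x.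
Proof. by rewrite ffunE unlift_none. Qed.

Lemma ffun_rcons_inord n (st : {ffun 'I_n.+1 -> T}) x (i : nat) : (i <= n.+1)%N ->
  ffun_rcons st x (inord i) = if (i < n.+1)%N then st (inord i) else x.
Proof.
move=> le_i; rewrite ffunE.
case: unliftP => [j|] /(congr1 val) /=; rewrite inordK //.
- rewrite /bump leqNgt ltn_ord add0n => ->.
  by rewrite ltn_ord; congr (st _); apply/val_inj; rewrite /= inordK.
- by move=> ->; rewrite ltnn.
Qed.

End FfunRcons.

Lemma ord0_inord n : (ord0 : 'I_n.+1) = inord 0.
Proof. by apply/val_inj; rewrite /= inordK. Qed.

Lemma ord_max_inord n : (ord_max : 'I_n.+1) = inord n.
Proof. by apply/val_inj; rewrite /= inordK. Qed.

Section WalkMass.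
Variables (R : realFieldType) (T : finType) (F : {set {set T}}).
Variables (rho : {set T} -> T -> T -> R) (winit : T -> R).

(* A word is given as a function [w : nat -> {set T}] with its length [n] kept
   separate, so that [n] can vary in inductions; for [n := size W] and
   [w := nth set0 W] these are [is_walk] and [walk_prob] up to conversion. *)
Definition walk_of n (w : nat -> {set T}) (st : {ffun 'I_n.+1 -> T}) : bool :=
  [forall i : 'I_n, [&& w i \in F, st (inord i) \in w i &
      st (inord i.+1) \in A rho (w i) (st (inord i))]].

Definition weight_of n (w : nat -> {set T}) (st : {ffun 'I_n.+1 -> T}) : R :=
  winit (st ord0) * \prod_(i < n) rho (w i) (st (inord i)) (st (inord i.+1)).

Definition last_mass n (w : nat -> {set T}) (s : T) : R :=
  \sum_(st : {ffun 'I_n.+1 -> T} | walk_of w st && (st ord_max == s)) weight_of w st.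

Lemma walk_of_rcons n w (st : {ffun 'I_n.+1 -> T}) x :
  walk_of w (ffun_rcons st x) = walk_of w st &&
    [&& w n \in F, st ord_max \in w n & x \in A rho (w n) (st ord_max)].
Proof.
rewrite ord_max_inord; apply/forallP/andP.
- move=> walk_ext; split.
  + apply/forallP=> i; have := walk_ext (widen_ord (leqnSn n) i).
    have lt_in := ltn_ord i.
    have lt_i : (i < n.+1)%N by lia. have lt_iS : (i.+1 < n.+1)%N by lia.
    by rewrite /= !ffun_rcons_inord ?lt_i ?lt_iS //; lia.
  + have := walk_ext ord_max.
    by rewrite /= !ffun_rcons_inord ?ltnS ?leqnn ?ltnn.
- case=> /forallP walk_st last_step i; have lt_in := ltn_ord i.
  rewrite /= !ffun_rcons_inord ?(ltnW lt_in) // lt_in ltnS.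
  case: (ltnP i n) => [lt_in' | le_ni]; first exact: walk_st (Ordinal lt_in').
  by have -> : (i : nat) = n by lia.
Qed.

Lemma weight_of_rcons n w (st : {ffun 'I_n.+1 -> T}) x :
  weight_of w (ffun_rcons st x) = weight_of w st * rho (w n) (st ord_max) x.
Proof.
rewrite /weight_of big_ord_recr /= ord_max_inord.
rewrite !ffun_rcons_inord ?ltnS ?leqnn ?ltnn // mulrA; congr (_ * _ * _).
- by rewrite !ord0_inord ffun_rcons_inord.
- apply: eq_bigr => i _; have lt_in := ltn_ord i.
  have lt_i : (i < n.+1)%N by lia. have lt_iS : (i.+1 < n.+1)%N by lia.
  by rewrite /= !ffun_rcons_inord ?lt_i ?lt_iS //; lia.
Qed.

Lemma last_mass0 w s : last_mass 0 w s = winit s.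
Proof.
rewrite /last_mass (reindex (fun x : T => [ffun _ : 'I_1 => x])) /=; last first.
  apply/onW_bij; exists (fun st : {ffun 'I_1 -> T} => st ord0) => [x|st].
    by rewrite ffunE.
  by apply/ffunP => i; rewrite ffunE (ord1 i).
rewrite (eq_bigl (pred1 s)) => [|x]; last first.
  have -> : walk_of w [ffun _ : 'I_1 => x] by apply/forallP => -[].
  by rewrite ffunE.
by rewrite big_pred1_eq /weight_of ffunE big_ord0 mulr1.
Qed.

Lemma last_massS n w s' : w n \in F ->
  last_mass n.+1 w s' =
  \sum_(s in w n | s' \in A rho (w n) s) last_mass n w s * rho (w n) s s'.
Proof.
move=> wnF; rewrite /last_mass big_mkcond big_ffun_rcons.
under eq_bigr => st _.
  rewrite (bigD1 s') //= big1 => [|x /negPf neq_xs]; last first.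
    by rewrite ffun_rcons_max neq_xs andbF.
  rewrite walk_of_rcons weight_of_rcons ffun_rcons_max eqxx andbT wnF addr0.
over.
rewrite (partition_big (fun st : {ffun 'I_n.+1 -> T} => st ord_max) predT) //=.
rewrite [RHS]big_mkcond /=; apply: eq_bigr => s _.
rewrite -big_mkcondl /= big_distrl /=.
case: ifP => step_s; last first.
  by rewrite big_pred0 // => st; case: eqP => [->|]; rewrite ?andbT ?step_s ?andbF.
apply: eq_big => [st|st /andP[_ /eqP ->]] //.
by case: eqP => [->|]; rewrite ?andbF // !andbT step_s andbT.
Qed.

End WalkMass.

Section MassBound.
Variables (R : realFieldType) (T : finType) (F : {set {set T}}).
Variables (rho : {set T} -> T -> T -> R) (omega winit : T -> R).
Variables (lambda : {set T} -> R) (g : R).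
Hypothesis rho_ge0 : forall f s s', f \in F -> s \in f -> 0 <= rho f s s'.
Hypothesis omega_gt0 : forall s, 0 < omega s.
Hypothesis g_ge0 : 0 <= g.
Hypothesis winit_le : forall s, winit s <= g * omega s.
Hypothesis lambda_ge : forall f s', f \in F ->
  \sum_(s in f | s' \in A rho f s) rho f s s' * (omega s / omega s') <= lambda f.

Lemma lambda_ge0 f (s' : T) : f \in F -> 0 <= lambda f.
Proof.
move=> fF; apply: le_trans (lambda_ge s' fF); apply: sumr_ge0 => s /andP[sf _].
by rewrite mulr_ge0 ?rho_ge0 ?divr_ge0 ?ltW.
Qed.

Lemma last_mass_le n (w : nat -> {set T}) : (forall i, (i < n)%N -> w i \in F) ->
  forall s, last_mass F rho winit n w s <= g * \prod_(i < n) lambda (w i) * omega s.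
Proof.
elim: n w => [|n IH] w wF s'; first by rewrite last_mass0 big_ord0 mulr1.
have wnF : w n \in F by apply: wF.
have wF' i : (i < n)%N -> w i \in F by move=> lt_in; apply/wF/ltnW.
set L := \prod_(i < n) lambda (w i).
have L_ge0 : 0 <= L by apply: prodr_ge0 => i _; apply: (lambda_ge0 s'); apply/wF'.
rewrite last_massS // big_ord_recr -/L /=.
apply: le_trans (_ : \sum_(s in w n | s' \in A rho (w n) s)
    g * L * omega s * rho (w n) s s' <= _).
  apply: ler_sum => s /andP[sf _].
  by rewrite ler_wpM2r ?rho_ge0 ?IH.
have omega_s' := omega_gt0 s'.
rewrite (eq_bigr (fun s => g * L * omega s' * (rho (w n) s s' * (omega s / omega s'))));
  last by move=> s _; field; rewrite gt_eqF.
rewrite -mulr_sumr (_ : _ * (L * _) * _ = g * L * omega s' * lambda (w n)); last by ring.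
by rewrite ler_wpM2l ?lambda_ge // !mulr_ge0 // ltW.
Qed.

End MassBound.

Theorem lemma1 (R : realFieldType) (Omega : finType)
  (F : {set {set Omega}})
  (rho : {set Omega} -> Omega -> Omega -> R)
  (omega winit : Omega -> R) (lambda : {set Omega} -> R) :
  (forall f, f \in F -> f != set0) ->
  (forall f s, f \in F -> s \in f -> is_distr (rho f s)) ->
  is_distr omega -> (forall s, 0 < omega s) ->
  is_distr winit ->
  (forall f s', f \in F ->
     \sum_(s in f | s' \in A rho f s) rho f s s' * (omega s / omega s')
       <= lambda f) ->
  forall W : seq {set Omega}, all (fun f => f \in F) W ->
  (forall s : Omega,
     \sum_(st : {ffun 'I_(size W).+1 -> Omega}
            | is_walk rho F st && (walk_last st == s)) walk_prob rho winit st
       <= gamma_init omega winit * lambdaW lambda W * omega s) /\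
  \sum_(st : {ffun 'I_(size W).+1 -> Omega} | is_walk rho F st)
      walk_prob rho winit st
    <= gamma_init omega winit * lambdaW lambda W.
Proof.
move=> _ rho_distr [_ omega_sum1] omega_gt0 _ lambda_ge W WF.
set g := gamma_init omega winit.
have winit_le s : winit s <= g * omega s.
  by rewrite -ler_pdivrMr // (le_bigmax _ (fun s => winit s / omega s)).
have rho_ge0 f s s' : f \in F -> s \in f -> 0 <= rho f s s'.
  by move=> fF sf; case: (rho_distr f s fF sf).
have lambdaWE : lambdaW lambda W = \prod_(i < size W) lambda (nth set0 W i).
  by rewrite /lambdaW (big_nth set0) big_mkord.
have last_le s : \sum_(st : {ffun 'I_(size W).+1 -> Omega}
    | is_walk rho F st && (walk_last st == s)) walk_prob rho winit st
    <= g * lambdaW lambda W * omega s.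
  rewrite lambdaWE; apply: (last_mass_le rho_ge0 omega_gt0 _ winit_le lambda_ge).
  - exact: bigmax_ge_id.
  - by move=> i; apply: all_nthP.
split=> //.
rewrite (partition_big (@walk_last _ W) predT) //= -[leRHS]mulr1 -omega_sum1 mulr_sumr.
exact: ler_sum.
Qed.
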